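(* For every finite set $\textsc{prop}$ of propositional variables and every $\mathrm{PL}_{\{\oplus_3\}}[\textsc{prop}]$-formula $\phi$, every set of labeled examples that uniquely characterizes $\phi$ with respect to $\mathrm{PL}_{\{\oplus_3\}}[\textsc{prop}]$ contains at least $|\textsc{prop}|-1$ examples.
   Context: $\oplus_3$ is the ternary Boolean function $x\oplus y\oplus z$ (exclusive or). $\mathrm{PL}_{\{\oplus_3\}}[\textsc{prop}]$ is the set of formulas generated by $\phi::=x\mid\oplus_3(\phi_1,\phi_2,\phi_3)$ with $x\in\textsc{prop}$, evaluated under truth assignments $V:\textsc{prop}\to\{0,1\}$ in the obvious way; two formulas are equivalent if they agree under all such assignments. A labeled example is a pair $(V,\mathrm{lab})$ with $\mathrm{lab}\in\{0,1\}$; $\phi$ fits it if $\phi$ evaluates to $\mathrm{lab}$ under $V$. A set $E$ of labeled examples uniquely characterizes $\phi$ with respect to $\mathrm{PL}_{\{\oplus_3\}}[\textsc{prop}]$ if $\phi$ fits all of $E$ and every formula of $\mathrm{PL}_{\{\oplus_3\}}[\textsc{prop}]$ fitting all of $E$ is equivalent to $\phi$. *)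

From mathcomp Require Import all_boot.
Set Implicit Arguments. Unset Strict Implicit. Unset Printing Implicit Defensive.

Inductive xor3_formula (P : Type) : Type :=
| XVar : P -> xor3_formula P
| XXor3 : xor3_formula P -> xor3_formula P -> xor3_formula P -> xor3_formula P.

Fixpoint xeval (P : finType) (V : {ffun P -> bool}) (phi : xor3_formula P) : bool :=
  match phi with
  | XVar x => V x
  | XXor3 a b c => (xeval V a (+) xeval V b (+) xeval V c)
  end.

Definition xequiv (P : finType) (phi psi : xor3_formula P) : Prop :=
  forall V : {ffun P -> bool}, xeval V phi = xeval V psi.

Definition example (P : finType) := ({ffun P -> bool} * bool)%type.

Definition fits (P : finType) (phi : xor3_formula P) (e : example P) : Prop :=
  xeval e.1 phi = e.2.

Definition fits_all (P : finType) (phi : xor3_formula P) (E : {set example P}) : Prop :=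
  forall e, e \in E -> fits phi e.

Definition uniquely_characterizes (P : finType) (E : {set example P})
    (phi : xor3_formula P) : Prop :=
  fits_all phi E /\ forall psi : xor3_formula P, fits_all psi E -> xequiv psi phi.

(* XOR3 can add to phi the parity of any even set A of variables.  If E has fewer than
   |P| - 1 examples, then "|A| is even and A meets the true variables of each example in
   an even number of points" is a system of fewer than |P| linear equations over GF(2)
   in |P| unknowns, so by counting it has a nonzero solution A.  Then phi xor A fits E
   but differs from phi on the assignment making only one variable of A true. *)
From mathcomp Require Import all_boot.

Set Implicit Arguments.
Unset Strict Implicit.
Unset Printing Implicit Defensive.

Section ParityOfSets.

Variable T : finType.
Implicit Types A B C : {set T}.

Lemma count_enum_set A (p : pred T) : count p (enum A) = #|A :&: [set x | p x]|.
Proof.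
rewrite -size_filter -(card_uniqP (filter_uniq p (enum_uniq (mem A)))).
by apply: eq_card => x; rewrite mem_filter mem_enum !inE andbC.
Qed.

Definition symdiff A B := (A :\: B) :|: (B :\: A).

Lemma odd_card_symdiff A B : odd #|symdiff A B| = odd #|A| (+) odd #|B|.
Proof.
have disjoint_parts : (A :\: B) :&: (B :\: A) = set0.
  by apply/setP => x; rewrite !inE; case: (x \in A); case: (x \in B).
rewrite cardsU disjoint_parts cards0 subn0 -(cardsID B A) -(cardsID A B) setIC.
by rewrite !oddD; case: (odd _); case: (odd _); case: (odd _).
Qed.

Lemma symdiffIl A B C : symdiff A B :&: C = symdiff (A :&: C) (B :&: C).
Proof.
by apply/setP => x; rewrite !inE; case: (x \in A); case: (x \in B); case: (x \in C).
Qed.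

Lemma symdiff_eq0 A B : (symdiff A B == set0) = (A == B).
Proof.
apply/eqP/eqP => [AB0|->]; last by apply/setP => x; rewrite !inE andNb.
apply/setP => x; have /setP/(_ x) := AB0.
by rewrite !inE; case: (x \in A); case: (x \in B).
Qed.

(* Pigeonhole on the 2 ^ #|T| subsets of T, which have only 2 ^ size F parity profiles. *)
Lemma exists_even_set (F : seq {set T}) :
  size F < #|T| ->
  exists2 A, A != set0 & forall B, B \in F -> ~~ odd #|A :&: B|.
Proof.
move=> small.
pose profile A := [ffun i : 'I_(size F) => odd #|A :&: nth set0 F i|].
have /injectivePn [A1 [A2 neqA eq_profile]] : ~~ injectiveb profile.
  apply: contraL small => /injectiveP/leq_card.
  have card_sets : #|{set T}| = 2 ^ #|T|.
    by rewrite -cardsT -card_powerset powersetT cardsT.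
  rewrite card_ffun card_bool card_ord card_sets.
  by rewrite leq_exp2l // -leqNgt.
exists (symdiff A1 A2); first by rewrite symdiff_eq0.
move=> B BF; have iF : index B F < size F by rewrite index_mem.
have /ffunP/(_ (Ordinal iF)) := eq_profile.
by rewrite !ffunE /= nth_index // symdiffIl odd_card_symdiff => ->; rewrite addbb.
Qed.

End ParityOfSets.

(* phi xor the variables of s, for s of even length (an odd trailing one is dropped). *)
Fixpoint xor_vars (P : Type) (phi : xor3_formula P) (s : seq P) : xor3_formula P :=
  if s is a :: b :: r then XXor3 (xor_vars phi r) (XVar a) (XVar b) else phi.

Section XorVars.

Variables (P : finType) (V : {ffun P -> bool}) (phi : xor3_formula P).

Lemma xeval_xor_vars (s : seq P) :
  ~~ odd (size s) -> xeval V (xor_vars phi s) = xeval V phi (+) odd (count V s).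
Proof.
move: {2}(size s).+1 (ltnSn (size s)) => n; elim: n s => // n IH.
case=> [|a [|b r]] //= size_r even_r; first by rewrite addbF.
rewrite IH.
- by rewrite !oddD !oddb -!addbA [odd _ (+) _]addbC -addbA.
- by rewrite ltnS in size_r; apply: ltnW.
- by rewrite negbK in even_r.
Qed.

Lemma xeval_xor_set (A : {set P}) :
  ~~ odd #|A| ->
  xeval V (xor_vars phi (enum A)) = xeval V phi (+) odd #|A :&: [set x | V x]|.
Proof. by rewrite cardE => /xeval_xor_vars ->; rewrite count_enum_set. Qed.

End XorVars.

Theorem theoremA3 (P : finType) (phi : xor3_formula P) (E : {set example P}) :
  uniquely_characterizes E phi -> #|P| - 1 <= #|E|.
Proof.
move=> [fitE uniqE]; rewrite leqNgt ltn_subRL; apply/negP => small.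
pose F := setT :: [seq [set x | e.1 x] | e : example P <- enum E].
have [|A A_neq0 evenA] := @exists_even_set _ F; first by rewrite /= size_map -cardE.
have evenA_card : ~~ odd #|A| by rewrite -(setIT A) evenA ?mem_head.
pose psi := xor_vars phi (enum A).
have fit_psi : fits_all psi E.
  move=> e eE; have /evenA even_e : [set x | e.1 x] \in F.
    by rewrite inE map_f ?orbT ?mem_enum.
  by rewrite /fits xeval_xor_set // (negbTE even_e) addbF; apply: fitE.
have [a Aa] := set0Pn _ A_neq0.
have := uniqE psi fit_psi [ffun x => x == a]; rewrite xeval_xor_set //.
have -> : A :&: [set x | [ffun x => x == a] x] = [set a].
  by apply/setP => x; rewrite !inE ffunE andbC; case: eqP => // ->.
by rewrite cards1 addbT; case: xeval.
Qed.
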